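(* Let $R$ be a unital ring, and suppose there exist unital rings $S_1,\dots,S_m$ and natural numbers $n_1,\dots,n_m\geq2$ such that $\bigoplus_{j=1}^mM_{n_j}(S_j)$ embeds unitally into $R$. Then \[ R=[R,R]_1+[R,R]_1\cdot[R,R]_1\quad\text{and}\quad R=\Sigma^3\big([R,R]_1\cdot[R,R]_1\big). \] In particular, $\xi(R)\leq3$.
   Context: $[x,y]=xy-yx$; $[R,R]_1=\{[x,y]:x,y\in R\}$; $X\cdot Y=\{xy:x\in X,y\in Y\}$; $X+Y=\{x+y:x\in X,y\in Y\}$; $\Sigma^kX=\{x_1+\dots+x_k:x_i\in X\}$. For a unital ring $T$ generated by its commutators, $\xi(T)$ is the minimal $N$ such that every element of $T$ is a sum of $N$ elements of the form $[b,c][d,e]$. *)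

From HB Require Import structures.
From mathcomp Require Import all_boot all_order all_algebra.
Set Implicit Arguments. Unset Strict Implicit. Unset Printing Implicit Defensive.
Import GRing.Theory.
Local Open Scope ring_scope.

Definition commr {R : pzRingType} (x y : R) : R := x * y - y * x.

Definition comm_set {R : pzRingType} : R -> Prop :=
  fun z => exists x y : R, z = commr x y.

Definition set_mul {R : pzRingType} (X Y : R -> Prop) : R -> Prop :=
  fun z => exists x y, X x /\ Y y /\ z = x * y.

Definition set_add {R : pzRingType} (X Y : R -> Prop) : R -> Prop :=
  fun z => exists x y, X x /\ Y y /\ z = x + y.

Definition set_sigma {R : pzRingType} (k : nat) (X : R -> Prop) : R -> Prop :=
  fun z => exists xs : 'I_k -> R, (forall i, X (xs i)) /\ z = \sum_(i < k) xs i.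

Definition dsum_mx (m : nat) (S : 'I_m -> pzRingType) (n : 'I_m -> nat) : Type :=
  forall j : 'I_m, 'M[S j]_(n j).

Definition unital_embedding (m : nat) (S : 'I_m -> pzRingType) (n : 'I_m -> nat)
    (R : pzRingType) (f : dsum_mx S n -> R) : Prop :=
  [/\ forall x y : dsum_mx S n, f (fun j => x j + y j) = f x + f y,
      forall x y : dsum_mx S n, f (fun j => x j *m y j) = f x * f y,
      f (fun j => 1%:M) = 1
    & injective f].

From mathcomp Require Import all_boot all_order all_algebra.
From mathcomp Require Import zify.
From Stdlib Require Import FunctionalExtensionality.
Import GRing.Theory.
Local Open Scope ring_scope.

(* Writing n >= 2 as 3e + 2k with e in {0, 1} gives in every M_n(S), hence
   through the embedding in R, a family of matrix units u_ab (a, b < 5) of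
   shape M_3 (+) M_2 with sum 1, where either block may vanish.  This makes R
   a bimodule over the ring A of block diagonal 5 x 5 integer matrices, so it
   suffices to write 1 (x) 1 in the ring A (x) A^op in the shape of the two
   claims; for instance
     1 (x) 1 = (a (x) 1 - 1 (x) a) x + ([c, d] (x) 1) (b (x) 1 - 1 (x) b) y
   yields r = [a, x.r] + [c, d] [b, y.r]. *)

Definition blk3 (i : nat) : bool := (i < 3)%N.
Definition coblock (i j l : nat) : bool := (blk3 i == blk3 j) && (blk3 j == blk3 l).

(* Matrix units of M_3 (+) M_2, the blocks being {0, 1, 2} and {3, 4}. *)
Record block_units {R : pzRingType} (u : nat -> nat -> R) : Prop := BlockUnits {
  block_unitsM : forall i j k l : 'I_5,
    u i j * u k l = if (j == k) && coblock i j l then u i l else 0;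
  block_units_sum1 : \sum_(i < 5) u i i = 1 }.
Arguments block_unitsM {R u}.
Arguments block_units_sum1 {R u}.

Lemma sum_indicator_unique {T : finType} {V : pzSemiRingType} (P : pred T) (b : bool) :
  (forall x y, P x -> P y -> x = y) -> (b <-> exists x, P x) -> \sum_x (P x)%:R = b%:R :> V.
Proof.
move=> Puniq [bP Pb]; case: b bP Pb => [/(_ isT) [x Px] _ | _ Pb].
  rewrite (bigD1 x) //= Px big1 ?addr0 // => y nyx.
  by case: (boolP (P y)) => // Py; case/eqP: nyx; apply: Puniq.
by rewrite big1 // => x; case: (boolP (P x)) => // Px; have := Pb (ex_intro _ x Px).
Qed.

(* Elements of A; only the entries of index < 5 matter. *)
Definition imx := nat -> nat -> int.

(* Big operators are locked, hence do not compute: the operations used by the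
   certificates are written with explicit sums and folds, for vm_compute. *)
Definition sum5 (F : nat -> int) : int := F 0%N + F 1%N + F 2%N + F 3%N + F 4%N.

Definition imx_mul (M N : imx) : imx :=
  fun i l => sum5 (fun j => if coblock i j l then M i j * N j l else 0).
Definition imx_sub (M N : imx) : imx := fun i j => M i j - N i j.
Definition imx_opp (M : imx) : imx := fun i j => - M i j.
Definition imx_comm (M N : imx) : imx := imx_sub (imx_mul M N) (imx_mul N M).
Definition imx_of (s : seq (seq int)) : imx := fun i j => nth 0 (nth [::] s i) j.
Definition imx_unit (a b : nat) (k : int) : imx :=
  fun i j => if (i == a) && (j == b) then k else 0.

(* A list of pairs (P, Q) stands for the sum of the P (x) Q in A (x) A^op,
   acting on R by r |-> P r Q. *)
Definition itens := seq (imx * imx).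

Definition itens_lmul (M : imx) (T : itens) : itens := [seq (imx_mul M PQ.1, PQ.2) | PQ <- T].
Definition itens_rmul (T : itens) (M : imx) : itens := [seq (PQ.1, imx_mul PQ.2 M) | PQ <- T].
Definition itens_opp (T : itens) : itens := [seq (imx_opp PQ.1, PQ.2) | PQ <- T].
Definition itens_comm (M : imx) (T : itens) : itens :=
  itens_lmul M T ++ itens_opp (itens_rmul T M).
Definition itens_pcomm (C D B : imx) (Z : itens) : itens :=
  itens_lmul (imx_comm C D) (itens_comm B Z).
(* (a, b, c, d, k) stands for k E_ab (x) E_cd. *)
Definition itens_of (s : seq (nat * nat * nat * nat * int)) : itens :=
  [seq let: (a, b, c, d, k) := e in (imx_unit a b k, imx_unit c d 1) | e <- s].

Definition itens_coef (T : itens) (a b c d : nat) : int :=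
  foldr (fun PQ z => PQ.1 a b * PQ.2 c d + z) 0 T.
Definition all5 (P : pred nat) : bool := all P (iota 0 5).
Definition itens_is_one (T : itens) : bool :=
  all5 (fun a => all5 (fun b => all5 (fun c => all5 (fun d =>
    itens_coef T a b c d == ((a == b) && (c == d))%:R)))).

Lemma sum5E (F : nat -> int) : sum5 F = \sum_(i < 5) F i.
Proof. by rewrite /sum5 !big_ord_recr big_ord0 /= add0r. Qed.

Lemma itens_coefE T a b c d : itens_coef T a b c d = \sum_(PQ <- T) PQ.1 a b * PQ.2 c d.
Proof. by elim: T => [|PQ T /= ->]; rewrite ?big_nil ?big_cons. Qed.

Lemma itens_is_oneP T : itens_is_one T ->
  forall a b c d : 'I_5, itens_coef T a b c d = ((a == b) && (c == d))%:R.
Proof.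
have iota5 (x : 'I_5) : nat_of_ord x \in iota 0 5 by rewrite mem_iota ltn_ord.
move=> T1 a b c d; apply/eqP.
by move: T1 => /allP/(_ _ (iota5 a))/allP/(_ _ (iota5 b))/allP/(_ _ (iota5 c))/allP/(_ _ (iota5 d)).
Qed.

Definition imx_eval {R : pzRingType} (u : nat -> nat -> R) (M : imx) : R :=
  \sum_(i < 5) \sum_(j < 5) u i j *~ M i j.
Definition itens_act {R : pzRingType} (u : nat -> nat -> R) (T : itens) (r : R) : R :=
  \sum_(PQ <- T) imx_eval u PQ.1 * r * imx_eval u PQ.2.

Section Evaluation.
Context {R : pzRingType} {u : nat -> nat -> R} (hu : block_units u).

Lemma unit_mul_eval (i j : 'I_5) (N : imx) :
  u i j * imx_eval u N = \sum_(l < 5) (if coblock i j l then u i l *~ N j l else 0).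
Proof.
rewrite /imx_eval mulr_sumr (bigD1 j) //= [X in _ + X]big1; last first.
  move=> k /negbTE nkj.
  rewrite mulr_sumr big1 // => l _.
  by rewrite mulrzAr (block_unitsM hu) eq_sym nkj mul0rz.
rewrite addr0 mulr_sumr; apply: eq_bigr => l _.
by rewrite mulrzAr (block_unitsM hu) eqxx /=; case: ifP; rewrite ?mul0rz.
Qed.

Lemma imx_evalM M N : imx_eval u (imx_mul M N) = imx_eval u M * imx_eval u N.
Proof.
rewrite /imx_eval mulr_suml; apply: eq_bigr => i _.
rewrite mulr_suml; under [RHS]eq_bigr do rewrite mulrzAl unit_mul_eval mulrz_suml.
rewrite exchange_big /=; apply: eq_bigr => l _; rewrite /imx_mul sum5E mulrz_sumr.
apply: eq_big => // j _; case: ifP => _; last by rewrite mul0rz mulr0z.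
by rewrite -mulrzA mulrC.
Qed.

Lemma imx_evalB M N : imx_eval u (imx_sub M N) = imx_eval u M - imx_eval u N.
Proof.
rewrite /imx_eval -sumrB; apply: eq_bigr => i _; rewrite -sumrB.
by apply: eq_bigr => j _; rewrite mulrzBr.
Qed.

Lemma imx_evalN M : imx_eval u (imx_opp M) = - imx_eval u M.
Proof.
rewrite /imx_eval -sumrN; apply: eq_bigr => i _; rewrite -sumrN.
by apply: eq_bigr => j _; rewrite mulrNz.
Qed.

Lemma imx_eval_comm M N : imx_eval u (imx_comm M N) = commr (imx_eval u M) (imx_eval u N).
Proof. by rewrite imx_evalB !imx_evalM. Qed.

Lemma itens_act_cat T1 T2 r : itens_act u (T1 ++ T2) r = itens_act u T1 r + itens_act u T2 r.
Proof. exact: big_cat. Qed.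

Lemma itens_act_lmul M T r : itens_act u (itens_lmul M T) r = imx_eval u M * itens_act u T r.
Proof.
by rewrite /itens_act big_map mulr_sumr; apply: eq_bigr => PQ _; rewrite imx_evalM !mulrA.
Qed.

Lemma itens_act_rmul T M r : itens_act u (itens_rmul T M) r = itens_act u T r * imx_eval u M.
Proof.
by rewrite /itens_act big_map mulr_suml; apply: eq_bigr => PQ _; rewrite imx_evalM mulrA.
Qed.

Lemma itens_act_opp T r : itens_act u (itens_opp T) r = - itens_act u T r.
Proof.
by rewrite /itens_act big_map -sumrN; apply: eq_bigr => PQ _; rewrite imx_evalN !mulNr.
Qed.

Lemma itens_act_comm M T r :
  itens_act u (itens_comm M T) r = commr (imx_eval u M) (itens_act u T r).
Proof. by rewrite itens_act_cat itens_act_opp itens_act_lmul itens_act_rmul. Qed.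

Lemma imx_eval_sandwich (P Q : imx) r : imx_eval u P * r * imx_eval u Q =
  \sum_(a < 5) \sum_(b < 5) \sum_(c < 5) \sum_(d < 5) (u a b * r * u c d) *~ (P a b * Q c d).
Proof.
rewrite /imx_eval !mulr_suml; apply: eq_bigr => a _; rewrite !mulr_suml; apply: eq_bigr => b _.
rewrite mulr_sumr; apply: eq_bigr => c _; rewrite mulr_sumr; apply: eq_bigr => d _.
by rewrite !mulrzAl mulrzAr -mulrzA mulrC.
Qed.

Lemma itens_act_coef T r : itens_act u T r =
  \sum_(a < 5) \sum_(b < 5) \sum_(c < 5) \sum_(d < 5) (u a b * r * u c d) *~ itens_coef T a b c d.
Proof.
under [RHS]eq_bigr do under eq_bigr do under eq_bigr do under eq_bigr do
  rewrite itens_coefE mulrz_sumr.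
rewrite /itens_act (eq_bigr _ (fun PQ _ => imx_eval_sandwich PQ.1 PQ.2 r)).
rewrite exchange_big /=; apply: eq_bigr => a _; rewrite exchange_big /=; apply: eq_bigr => b _.
by rewrite exchange_big /=; apply: eq_bigr => c _; rewrite exchange_big.
Qed.

Lemma itens_act_one T r : itens_is_one T -> itens_act u T r = r.
Proof.
move/itens_is_oneP => T1; rewrite itens_act_coef.
transitivity (\sum_(a < 5) \sum_(c < 5) u a a * r * u c c); last first.
  rewrite -[RHS]mulr1 -(block_units_sum1 hu) -[X in X * _]mul1r -(block_units_sum1 hu).
  by rewrite !mulr_suml; apply: eq_bigr => a _; rewrite mulr_sumr.
apply: eq_bigr => a _; rewrite (bigD1 a) //= [X in _ + X]big1 => [|b nba]; last first.
  rewrite big1 // => c _; rewrite big1 // => d _.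
  by rewrite T1 eq_sym (negbTE nba) mulr0z.
rewrite addr0; apply: eq_bigr => c _; rewrite (bigD1 c) //= [X in _ + X]big1 => [|d ndc].
  by rewrite T1 !eqxx addr0.
by rewrite T1 eqxx eq_sym (negbTE ndc) mulr0z.
Qed.

Lemma itens_act_pcomm C D B Z r : itens_act u (itens_pcomm C D B Z) r =
  commr (imx_eval u C) (imx_eval u D) * commr (imx_eval u B) (itens_act u Z r).
Proof. by rewrite itens_act_lmul itens_act_comm imx_eval_comm. Qed.

Lemma itens_act_flatten Ts r : itens_act u (flatten Ts) r = \sum_(T <- Ts) itens_act u T r.
Proof. exact: big_flatten. Qed.

End Evaluation.

Definition comm_add_certificate : itens :=
  itens_comm
    (imx_of [:: [:: 0; 0; 0; 0; 0]; [:: 0; 1; 0; 0; 0]; [:: 0; 0; 1; 0; 0];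
                [:: 0; 0; 0; 1; 0]; [:: 0; 0; 0; 0; 0]])
    (itens_of [::
    (0, 0, 1, 1, -1); (0, 0, 2, 2, -1); (0, 0, 3, 3, -1); (0, 2, 1, 1, 1); (0, 2, 2, 2, 1);
    (0, 2, 3, 3, 1); (1, 1, 0, 0, 1); (1, 1, 4, 4, 1); (2, 0, 0, 0, -1); (2, 0, 4, 4, -1);
    (2, 2, 0, 0, 1); (2, 2, 4, 4, 1); (3, 3, 0, 0, 1); (3, 3, 1, 0, -1); (3, 3, 2, 0, 1);
    (3, 3, 4, 4, 1); (3, 4, 0, 0, 1); (3, 4, 4, 4, 1); (4, 3, 1, 1, -1); (4, 3, 1, 2, 1);
    (4, 3, 2, 2, -1); (4, 3, 3, 3, -1); (4, 4, 1, 1, -1); (4, 4, 2, 2, -1); (4, 4, 3, 3, -1);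
    (4, 4, 4, 3, 1)])
  ++ itens_pcomm
    (imx_of [:: [:: 0; 0; -1; 0; 0]; [:: 0; 0; 0; 0; 0]; [:: 0; 0; -1; 0; 0];
                [:: 0; 0; 0; -1; 0]; [:: 0; 0; 0; 1; 0]])
    (imx_of [:: [:: 0; 0; 0; 0; 0]; [:: -1; 0; 0; 0; 0]; [:: 0; 1; 0; 0; 0];
                [:: 0; 0; 0; 0; 1]; [:: 0; 0; 0; 0; 0]])
    (imx_of [:: [:: 0; 0; 0; 0; 0]; [:: 0; 0; -1; 0; 0]; [:: 1; 0; 0; 0; 0];
                [:: 0; 0; 0; 0; 0]; [:: 0; 0; 0; 1; 0]])
    (itens_of [::
    (0, 0, 4, 3, 1); (0, 1, 1, 1, -1); (0, 1, 2, 2, -1); (0, 1, 3, 3, -1); (0, 2, 1, 2, -1);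
    (1, 0, 0, 2, 1); (1, 2, 2, 1, -1); (1, 2, 3, 4, 1); (2, 0, 4, 4, 1); (2, 2, 1, 1, 1);
    (3, 3, 1, 1, -1); (3, 3, 1, 2, 1); (3, 3, 2, 2, -1); (3, 3, 3, 3, -1); (3, 4, 0, 0, 1);
    (3, 4, 4, 3, 1); (3, 4, 4, 4, 1)]).

Definition sum3_certificate : seq (imx * imx * imx * itens) := [::
  (imx_of [:: [:: 0; 0; -1; 0; 0]; [:: 0; 0; 0; 0; 0]; [:: 0; 0; -1; 0; 0];
              [:: 0; 0; 0; -1; 0]; [:: 0; 0; 0; 1; 0]],
   imx_of [:: [:: 0; 0; 0; 0; 0]; [:: -1; 0; 0; 0; 0]; [:: 0; 1; 0; 0; 0];
              [:: 0; 0; 0; 0; 1]; [:: 0; 0; 0; 0; 0]],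
   imx_of [:: [:: 0; 0; 0; 0; 0]; [:: 0; 0; -1; 0; 0]; [:: 1; 0; 0; 0; 0];
              [:: 0; 0; 0; 0; 0]; [:: 0; 0; 0; 1; 0]],
   itens_of [::
    (0, 0, 3, 3, 1); (0, 0, 4, 3, -1); (0, 1, 0, 0, -1); (0, 1, 1, 1, -1); (0, 1, 2, 2, -1);
    (0, 1, 3, 3, -1); (0, 1, 4, 4, -1); (0, 2, 1, 2, -1); (0, 2, 3, 3, -1); (0, 2, 4, 3, 2);
    (1, 0, 0, 1, 1); (1, 0, 0, 2, -1); (1, 2, 0, 1, -1); (1, 2, 0, 2, 2); (1, 2, 2, 1, -1);
    (1, 2, 3, 4, 1); (2, 0, 3, 4, 1); (2, 0, 4, 4, -1); (2, 2, 1, 1, 1); (2, 2, 3, 4, -1);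
    (2, 2, 4, 4, 2); (3, 3, 0, 2, 1); (3, 3, 2, 0, 1); (3, 3, 2, 2, 1); (3, 3, 3, 3, -2);
    (3, 3, 3, 4, 1); (3, 3, 4, 3, -1); (3, 4, 0, 0, 1); (3, 4, 0, 2, 1); (3, 4, 1, 0, 1);
    (3, 4, 1, 1, 1); (3, 4, 1, 2, 1); (3, 4, 2, 0, 1); (3, 4, 2, 2, 1); (3, 4, 3, 3, -1);
    (3, 4, 3, 4, 1); (3, 4, 4, 3, 1); (4, 3, 0, 1, -1); (4, 3, 2, 1, -1); (4, 4, 0, 1, -1);
    (4, 4, 1, 1, -1)]);
  (imx_of [:: [:: -1; 0; 0; 0; 0]; [:: 0; 0; 0; 0; 0]; [:: -1; 0; 0; 0; 0];
              [:: 0; 0; 0; -1; 0]; [:: 0; 0; 0; -1; 0]],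
   imx_of [:: [:: 0; 1; 1; 0; 0]; [:: 0; 0; 0; 0; 0]; [:: 0; 0; 0; 0; 0];
              [:: 0; 0; 0; 0; 1]; [:: 0; 0; 0; 0; 0]],
   imx_of [:: [:: 1; 0; 1; 0; 0]; [:: 0; 0; 0; 0; 0]; [:: 0; 0; 0; 0; 0];
              [:: 0; 0; 0; 0; -1]; [:: 0; 0; 0; -1; 0]],
   itens_of [::
    (0, 0, 1, 1, 1); (0, 0, 2, 0, -1); (0, 0, 4, 3, 1); (0, 2, 1, 1, -1); (0, 2, 2, 0, 1);
    (0, 2, 4, 3, -1); (2, 0, 0, 0, 1); (2, 0, 3, 3, 1); (2, 0, 4, 3, -1); (2, 2, 0, 0, -1);
    (2, 2, 3, 3, -1); (2, 2, 4, 3, 1); (3, 3, 2, 0, -1); (3, 3, 3, 3, 2); (3, 3, 3, 4, -4);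
    (3, 3, 4, 3, 1); (3, 3, 4, 4, -2); (3, 4, 1, 0, -1); (3, 4, 2, 0, -1); (3, 4, 3, 3, 2);
    (3, 4, 3, 4, -4); (3, 4, 4, 3, -1); (3, 4, 4, 4, 2); (4, 3, 1, 1, -1); (4, 4, 1, 1, -1)]);
  (imx_of [:: [:: -1; 0; 0; 0; 0]; [:: 0; 0; 1; 0; 0]; [:: 0; 0; 0; 0; 0];
              [:: 0; 0; 0; -1; 0]; [:: 0; 0; 0; 1; 0]],
   imx_of [:: [:: 0; 1; 0; 0; 0]; [:: 1; 0; 0; 0; 0]; [:: 0; 0; 0; 0; 0];
              [:: 0; 0; 0; -1; 1]; [:: 0; 0; 0; 0; 0]],
   imx_of [:: [:: 0; 0; 1; 0; 0]; [:: 0; 0; 1; 0; 0]; [:: 0; 0; 0; 0; 0];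
              [:: 0; 0; 0; 1; 1]; [:: 0; 0; 0; 0; 0]],
   itens_of [:: (3, 3, 3, 3, 3); (3, 3, 4, 3, 2); (3, 4, 3, 3, 3); (3, 4, 4, 3, -1)])].

Definition itens_pcomm_of (c : imx * imx * imx * itens) : itens :=
  let: (C, D, B, Z) := c in itens_pcomm C D B Z.

Lemma comm_add_certificate_is_one : itens_is_one comm_add_certificate.
Proof. by vm_compute. Qed.

Lemma sum3_certificate_is_one : itens_is_one (flatten (map itens_pcomm_of sum3_certificate)).
Proof. by vm_compute. Qed.

Lemma commr_comm_set {R : pzRingType} (x y : R) : comm_set (commr x y).
Proof. by exists x, y. Qed.

Lemma commr_mul_set {R : pzRingType} (x y z w : R) :
  set_mul comm_set comm_set (commr x y * commr z w).
Proof. by exists (commr x y), (commr z w); split; [|split]; try exact: commr_comm_set. Qed.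

Lemma commr_add_mul_set {R : pzRingType} (a b x y z w : R) :
  set_add comm_set (set_mul comm_set comm_set) (commr a b + commr x y * commr z w).
Proof.
exists (commr a b), (commr x y * commr z w).
by split; [exact: commr_comm_set | split; [exact: commr_mul_set |]].
Qed.

Lemma set_sigma_sum {R : pzRingType} {I : Type} (X : R -> Prop) (s : seq I) (F : I -> R) :
  (forall i, X (F i)) -> set_sigma (size s) X (\sum_(i <- s) F i).
Proof.
move=> XF; exists (fun k : 'I_(size s) => nth 0 [seq F i | i <- s] k); split.
  case: s => [|i0 s] k; first by case: k.
  by rewrite (nth_map i0) ?ltn_ord.
by rewrite -(big_map F xpredT id) (big_nth 0) big_mkord size_map.
Qed.

Section BlockUnitsCommutators.
Context {R : pzRingType} {u : nat -> nat -> R} (hu : block_units u).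

Lemma block_units_comm_add_mul (r : R) : set_add comm_set (set_mul comm_set comm_set) r.
Proof.
rewrite -(itens_act_one hu _ r comm_add_certificate_is_one).
rewrite /comm_add_certificate itens_act_cat (itens_act_comm hu) (itens_act_pcomm hu).
exact: commr_add_mul_set.
Qed.

Lemma block_units_sum3 (r : R) : set_sigma 3 (set_mul comm_set comm_set) r.
Proof.
rewrite -(itens_act_one hu _ r sum3_certificate_is_one) itens_act_flatten big_map.
apply: (@set_sigma_sum _ _ _ sum3_certificate) => -[[[C D] B] Z] /=.
by rewrite (itens_act_pcomm hu); exact: commr_mul_set.
Qed.

End BlockUnitsCommutators.

(* An index p < n = 3 e + 2 k is sent to the pattern index slot n p < 5: the
   first 3 e indices form one copy of the 3-block, the others k copies of the
   2-block, and layer n p numbers the copy. *)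
Definition slot (n p : nat) : nat :=
  if (p < 3 * (n %% 2))%N then p else (3 + (p - 3 * (n %% 2)) %% 2)%N.
Definition layer (n p : nat) : nat :=
  if (p < 3 * (n %% 2))%N then 0 else ((p - 3 * (n %% 2)) %/ 2)%N.

Lemma slot_lt5 n p : (slot n p < 5)%N.
Proof. by rewrite /slot; case: (ltnP p (3 * _)); lia. Qed.

Lemma slot_layer_inj {n p q : nat} : (p < n)%N -> (q < n)%N ->
  slot n p = slot n q -> layer n p = layer n q -> p = q.
Proof.
by rewrite /slot /layer; case: (ltnP p (3 * _)); case: (ltnP q (3 * _)); lia.
Qed.

Lemma slot_layer_surj {n p j : nat} : (2 <= n)%N -> (p < n)%N -> (j < 5)%N ->
  blk3 j = blk3 (slot n p) -> exists2 w, (w < n)%N & slot n w = j /\ layer n w = layer n p.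
Proof.
rewrite /blk3 /slot /layer => n_ge2 p_lt j_lt.
case: (ltnP p (3 * (n %% 2))) => p3 bj.
  have j3 : (j < 3)%N by rewrite bj; lia.
  have js : (j < 3 * (n %% 2))%N by lia.
  by exists j; rewrite ?js; lia.
have j3 : (3 <= j)%N by rewrite leqNgt bj; lia.
exists (3 * (n %% 2) + 2 * ((p - 3 * (n %% 2)) %/ 2) + (j - 3))%N; first lia.
by rewrite (_ : (_ < 3 * (n %% 2))%N = false); lia.
Qed.

Section BlockUnitMatrices.
Variables (S : pzRingType) (n : nat).
Hypothesis n_ge2 : (2 <= n)%N.

Definition block_unit_entry (i k p q : nat) : bool :=
  [&& blk3 i == blk3 k, slot n p == i, slot n q == k & layer n p == layer n q].

Definition block_unit_mx (i k : nat) : 'M[S]_n := \matrix_(p, q) (block_unit_entry i k p q)%:R.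

Lemma block_unit_entry_mul {i j k l p r q : nat} :
    block_unit_entry i j p r -> block_unit_entry k l r q ->
  [/\ j = k, coblock i j l, block_unit_entry i l p q & slot n r = j /\ layer n r = layer n p].
Proof.
rewrite /block_unit_entry /coblock => /and4P [/eqP bij /eqP pi /eqP rj /eqP e1].
move=> /and4P [/eqP bkl /eqP rk /eqP ql /eqP e2].
have jk : j = k by rewrite -rj -rk.
by rewrite -jk in bkl *; rewrite bij bkl pi ql rj e1 e2 !eqxx.
Qed.

Lemma block_unit_entry_mid {i j l : nat} {p q : 'I_n} :
    (j < 5)%N -> coblock i j l -> block_unit_entry i l p q ->
  exists2 r : 'I_n, block_unit_entry i j p r & block_unit_entry j l r q.
Proof.
rewrite /block_unit_entry /coblock => j5 /andP [/eqP bij /eqP bjl].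
move=> /and4P [_ /eqP p_i /eqP q_l /eqP e].
have := slot_layer_surj n_ge2 (ltn_ord p) j5.
rewrite p_i bij => /(_ erefl) [w w_lt [w_j w_layer]].
by exists (Ordinal w_lt); rewrite /= w_j w_layer ?p_i ?q_l ?e ?bij ?bjl !eqxx.
Qed.

Lemma block_unit_mxM (i j k l : 'I_5) : block_unit_mx i j * block_unit_mx k l =
  if (j == k) && coblock i j l then block_unit_mx i l else 0.
Proof.
apply/matrixP => p q; rewrite -mulmxE !mxE.
under eq_bigr do rewrite !mxE -natrM mulnb.
have -> : (if (j == k) && coblock i j l then block_unit_mx i l else 0) p q =
          ((j == k) && coblock i j l && block_unit_entry i l p q)%:R.
  by case: ifP; rewrite !mxE.
apply: sum_indicator_unique.
  move=> r r' /andP [pr rq] /andP [pr' r'q].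
  have [_ _ _ [r_j r_p]] := block_unit_entry_mul pr rq.
  have [_ _ _ [r'_j r'_p]] := block_unit_entry_mul pr' r'q.
  by apply/val_inj/(slot_layer_inj (ltn_ord r) (ltn_ord r')); rewrite ?r_j ?r'_j ?r_p ?r'_p.
split.
  case/andP => [/andP [/eqP <- c] e].
  by have [r ? ?] := block_unit_entry_mid (ltn_ord j) c e; exists r; apply/andP.
case=> r /andP [pr rq].
by have [/val_inj <- c e _] := block_unit_entry_mul pr rq; rewrite eqxx c e.
Qed.

Lemma block_unit_mx_sum : \sum_(i < 5) block_unit_mx i i = 1.
Proof.
apply/matrixP => p q; rewrite summxE !mxE.
under eq_bigr do rewrite mxE.
apply: sum_indicator_unique.
  move=> i i' /and4P [_ /eqP p_i _ _] /and4P [_ /eqP p_i' _ _].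
  by apply: val_inj; rewrite /= -p_i -p_i'.
split => [/eqP <-| [i /and4P [_ /eqP p_i /eqP q_i /eqP e]]].
  by exists (Ordinal (slot_lt5 n p)); rewrite /block_unit_entry !eqxx.
by apply/eqP/val_inj/(slot_layer_inj (ltn_ord p) (ltn_ord q)); rewrite ?p_i ?q_i.
Qed.

Lemma block_units_mx : block_units block_unit_mx.
Proof. by constructor; [exact: block_unit_mxM | exact: block_unit_mx_sum]. Qed.

End BlockUnitMatrices.

Lemma block_units_dsum {m : nat} {S : 'I_m -> pzRingType} {n : 'I_m -> nat}
    {R : pzRingType} {f : dsum_mx S n -> R} {U : forall j, nat -> nat -> 'M[S j]_(n j)} :
  (forall x y : dsum_mx S n, f (fun j => x j + y j) = f x + f y) ->
  (forall x y : dsum_mx S n, f (fun j => x j *m y j) = f x * f y) ->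
  f (fun j => 1%:M) = 1 ->
  (forall j, block_units (U j)) -> block_units (fun i k => f (fun j => U j i k)).
Proof.
move=> fD fM f1 hU.
have f0 : f (fun j => 0) = 0.
  apply: (addrI (f (fun j => 0))); rewrite -fD addr0.
  by congr f; apply: functional_extensionality_dep => j; rewrite addr0.
have fsum (I : Type) (s : seq I) (F : I -> dsum_mx S n) :
    \sum_(i <- s) f (F i) = f (fun j => \sum_(i <- s) F i j).
  elim: s => [|i s IH]; rewrite ?big_nil ?big_cons.
    by rewrite -f0; congr f; apply: functional_extensionality_dep => j; rewrite big_nil.
  by rewrite IH -fD; congr f; apply: functional_extensionality_dep => j; rewrite big_cons.
split=> [i j k l|].
  rewrite -fM; transitivity (f (fun jj => if (j == k) && coblock i j l then U jj i l else 0)).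
    by congr f; apply: functional_extensionality_dep => jj; rewrite mulmxE (block_unitsM (hU jj)).
  by case: ifP.
rewrite fsum -f1; congr f; apply: functional_extensionality_dep => jj.
by rewrite (block_units_sum1 (hU jj)) idmxE.
Qed.

Theorem theorem5p15 (R : pzRingType) (m : nat) (S : 'I_m -> pzRingType)
    (n : 'I_m -> nat) (hn : forall j, (2 <= n j)%N)
    (f : dsum_mx S n -> R) (hf : unital_embedding f) :
  (forall r : R, set_add (@comm_set R) (set_mul (@comm_set R) (@comm_set R)) r) /\
  (forall r : R, set_sigma 3 (set_mul (@comm_set R) (@comm_set R)) r).
Proof.
case: hf => fD fM f1 _.
have hu := block_units_dsum fD fM f1 (fun j => block_units_mx (S j) (n j) (hn j)).
by split=> r; [exact: block_units_comm_add_mul hu r | exact: block_units_sum3 hu r].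
Qed.
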